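(* Let $l\ge 1$, $d=2l+1$, and let $V=\mathbb{F}_3^{d}$ (or $S^d$ with $|S|=3$). Define relations on $V$: $S_0=\{(\mathbf x,\mathbf x)\}$, and for $j=1,2,3$, $S_j=\{(\mathbf x,\mathbf y): \delta(\mathbf x,\mathbf y)\ge 1,\ \delta(\mathbf x,\mathbf y)\equiv j\pmod 3\}$, where $\delta$ is the Hamming distance (this is a three-class association scheme, the KSD-scheme). Let $A_0=I,A_1,A_2,A_3$ be the adjacency matrices of $S_0,\dots,S_3$. Then $$A_1^3=\big(3^{4l-1}+(-1)^l3^{3l}+5\cdot 3^{2l-1}\big)A_1+\big(3^{4l-1}+(-1)^l3^{3l}+2\cdot 3^{2l-1}\big)(J-A_1),$$ $$A_2^3=\big(3^{4l-1}-(-1)^l3^{3l}+5\cdot 3^{2l-1}\big)A_2+\big(3^{4l-1}-(-1)^l3^{3l}+2\cdot 3^{2l-1}\big)(J-A_2),$$ $$(A_3+I)^3=\big(3^{4l-1}+2\cdot 3^{2l-1}\big)(A_3+I)+\big(3^{4l-1}-3^{2l-1}\big)(J-A_3-I).$$ Consequently $A_1$, $A_2$, $A_3+I$ are incidence matrices of three non-isomorphic symmetric partial geometric designs with parameters $(v,k;\alpha,\beta)$: $\big(3^{2l+1},\ 3^{2l}+(-1)^l3^l;\ 3^{4l-1}+(-1)^l3^{3l}+2\cdot 3^{2l-1},\ 3^{4l-1}+(-1)^l3^{3l}+5\cdot 3^{2l-1}\big)$, $\big(3^{2l+1},\ 3^{2l}-(-1)^l3^l;\ 3^{4l-1}-(-1)^l3^{3l}+2\cdot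 3^{2l-1},\ 3^{4l-1}-(-1)^l3^{3l}+5\cdot 3^{2l-1}\big)$, $\big(3^{2l+1},\ 3^{2l};\ 3^{4l-1}-3^{2l-1},\ 3^{4l-1}+2\cdot 3^{2l-1}\big)$.
   Context: $J$ is the all-ones matrix. A symmetric partial geometric design with parameters $(v,k;\alpha,\beta)$ is a design with $v$ points and $v$ blocks, each block of size $k$ and each point in $k$ blocks, whose incidence matrix $N$ satisfies $NN^TN=\beta N+\alpha(J-N)$. *)

From HB Require Import structures.
From mathcomp Require Import all_boot all_order all_algebra all_fingroup.
Set Implicit Arguments. Unset Strict Implicit. Unset Printing Implicit Defensive.
Import Order.TTheory GRing.Theory Num.Theory.
Local Open Scope ring_scope.

Definition KSDpt (l : nat) := {ffun 'I_(2 * l + 1) -> 'I_3}.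

Definition hamming (l : nat) (x y : KSDpt l) : nat := #|[set i | x i != y i]|.

Definition KSDrel (l j : nat) (x y : KSDpt l) : bool :=
  if j == 0%N then x == y
  else (0 < hamming x y)%N && (hamming x y == j %[mod 3]).

Definition KSDadj (l j : nat) : 'M[int]_#|KSDpt l| :=
  \matrix_(i, k) (KSDrel j (enum_val i) (enum_val k))%:R.

Definition Jmx (n : nat) : 'M[int]_n := const_mx 1.

(* N (n x n) is the incidence matrix of a symmetric partial geometric design with
   parameters (v,k;alpha,beta): v points, v blocks, 0/1 entries, every block of
   size k, every point in k blocks, and N N^T N = beta N + alpha (J - N). *)
Definition sym_partial_geometric (n v k : nat) (alpha beta : int) (N : 'M[int]_n) : Prop :=
  [/\ n = v,
      forall i j, N i j = 0 \/ N i j = 1,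
      forall i, \sum_j N i j = k%:Z,
      forall j, \sum_i N i j = k%:Z &
      N *m N^T *m N = beta *: N + alpha *: (Jmx n - N)].

Definition design_iso (n : nat) (N N' : 'M[int]_n) : Prop :=
  exists (s t : 'S_n), forall i j, N' i j = N (s i) (t j).

From HB Require Import structures.
From mathcomp Require Import all_boot all_order all_algebra all_fingroup.
From mathcomp Require Import algC cyclotomic ring zify.
Import Order.TTheory GRing.Theory Num.Theory.
Set Implicit Arguments.
Unset Strict Implicit.
Unset Printing Implicit Defensive.
Local Open Scope ring_scope.

(* Let w be a primitive cube root of unity and delta the Hamming distance.  The
   indicator of delta = j (mod 3) is (1 + w^(2j) w^delta + w^j w^(2 delta)) / 3, so
   A_1, A_2 and A_3 + I are combinations of J, I and the matrices P_a = (a^delta)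
   for a = w, w^2.  Summing over the middle word factorises coordinatewise, giving
   P_a P_b = (1 + 2ab)^d P_e with (1 + 2ab) e = a + b + ab; since (1 + 2w)^2 = -3
   the span of J, P_w, P_(w^2), I is an algebra with explicit structure constants
   in which the cubes are computed.  The three designs have different block sizes,
   hence are pairwise non-isomorphic. *)

Section Hamming.
Variable l : nat.
Local Notation d := (2 * l + 1)%N.
Implicit Types x y : KSDpt l.

Lemma hammingC x y : hamming x y = hamming y x.
Proof. by apply: eq_card => i; rewrite !inE eq_sym. Qed.

Lemma hamming_eq0 x y : (hamming x y == 0)%N = (x == y).
Proof.
rewrite /hamming cards_eq0; apply/eqP/eqP => [xy0|->].
  apply/ffunP => i; apply/eqP; apply: contraT => xi_neq.
  by rewrite -(in_set0 i) -xy0 inE.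
by apply/setP => i; rewrite !inE eqxx.
Qed.

Lemma hamming_le x y : (hamming x y <= d)%N.
Proof. by apply: leq_trans (max_card _) _; rewrite card_ord. Qed.

Lemma prod_hamming (R : comNzRingType) (a b : R) x y :
  \prod_i (if x i == y i then a else b) = a ^+ (d - hamming x y) * b ^+ hamming x y.
Proof.
have hamE : hamming x y = #|[pred i | x i != y i]| by rewrite /hamming cardsE.
have agreeE : #|[pred i | x i == y i]| = (d - hamming x y)%N.
  have := cardC [pred i | x i != y i]; rewrite card_ord -hamE.
  have -> : #|[predC [pred i | x i != y i]]| = #|[pred i | x i == y i]|.
    by apply: eq_card => i; rewrite !inE negbK.
  lia.
rewrite (bigID [pred i | x i == y i]) /=.
rewrite (eq_bigr (fun=> a)); last by move=> i ->.
rewrite [X in _ * X](eq_bigr (fun=> b)); last by move=> i /negbTE ->.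
by rewrite !prodr_const agreeE hamE.
Qed.

End Hamming.

Section HammingPowerMatrix.
Variables (R : comNzRingType) (l : nat).

Local Notation d := (2 * l + 1)%N.
Local Notation n := #|KSDpt l|.

Definition hammx (a : R) : 'M[R]_n :=
  \matrix_(i, k) a ^+ hamming (enum_val i) (enum_val k).

Lemma sum_ord3_mismatch (a b : R) (u v : 'I_3) :
  \sum_c ((if u == c then 1 else a) * (if c == v then 1 else b)) =
  if u == v then 1 + 2 * a * b else a + b + a * b.
Proof.
rewrite !big_ord_recr big_ord0 /=.
by case: u v => [[|[|[|?]]] ?] [[|[|[|?]]] ?] //=; rewrite /eq_op /=; ring.
Qed.

Lemma hammx_mulE (a b : R) i k :
  (hammx a *m hammx b) i k =
  (1 + 2 * a * b) ^+ (d - hamming (enum_val i) (enum_val k)) *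
  (a + b + a * b) ^+ hamming (enum_val i) (enum_val k).
Proof.
have exprE (c : R) (x y : KSDpt l) :
    c ^+ hamming x y = \prod_j (if x j == y j then 1 else c).
  by rewrite prod_hamming expr1n mul1r.
transitivity (\sum_(z : KSDpt l) a ^+ hamming (enum_val i) z * b ^+ hamming z (enum_val k)).
  by rewrite mxE [RHS]big_enum_val; apply: eq_bigr => j _; rewrite !mxE.
under eq_bigr do rewrite !exprE -big_split /=.
rewrite -(bigA_distr_bigA (fun j c => (if enum_val i j == c then 1 else a) *
  (if c == enum_val k j then 1 else b))) -prod_hamming /=.
by apply: eq_bigr => j _; rewrite sum_ord3_mismatch.
Qed.

Lemma hammx_mul (a b p e : R) :
  1 + 2 * a * b = p -> a + b + a * b = p * e ->
  hammx a *m hammx b = p ^+ d *: hammx e.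
Proof.
move=> pE peE; apply/matrixP => i k.
by rewrite hammx_mulE pE peE exprMn mulrA -exprD subnK ?hamming_le // !mxE.
Qed.

Lemma hammx0 : hammx 0 = 1%:M.
Proof.
apply/matrixP => i k; rewrite !mxE expr0n hamming_eq0 (inj_eq enum_val_inj).
by case: (i == k).
Qed.

End HammingPowerMatrix.

Definition mod3mx (l j : nat) : 'M[int]_#|KSDpt l| :=
  \matrix_(i, k) (hamming (enum_val i) (enum_val k) == j %[mod 3])%:R.

Section CubeRootOfUnity.
Variables (F : numFieldType) (w : F).
Hypothesis w2 : w ^+ 2 = - w - 1.

Lemma expr_w_mod3 m : w ^+ m = w ^+ (m %% 3).
Proof.
have w3 : w ^+ 3 = 1 by ring: w2.
by rewrite {1}(divn_eq m 3) exprD mulnC exprM w3 expr1n mul1r.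
Qed.

Lemma eqmod3_indicator j m :
  ((m == j %[mod 3])%:R : F) = (1 + w ^+ (2 * j + m) + w ^+ (j + 2 * m)) / 3.
Proof.
rewrite [w ^+ (2 * j + m)]expr_w_mod3 [w ^+ (j + 2 * m)]expr_w_mod3.
rewrite -(modnDm (2 * j)) -(modnDm j) -(modnMmr 2 j) -(modnMmr 2 m).
have := ltn_pmod j (isT : 0 < 3)%N; have := ltn_pmod m (isT : 0 < 3)%N.
by case: (m %% 3)%N => [|[|[|?]]] //; case: (j %% 3)%N => [|[|[|?]]] //= _ _;
  field: w2.
Qed.

Variable l : nat.
Local Notation d := (2 * l + 1)%N.
Local Notation n := #|KSDpt l|.

Local Notation toF := (map_mx (intr : int -> F)).

Definition hcomb (c0 c1 c2 c3 : F) : 'M[F]_n :=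
  c0 *: hammx l 1 + c1 *: hammx l w + c2 *: hammx l (w ^+ 2) + c3 *: 1%:M.

Lemma map_mod3mx j :
  toF (mod3mx l j) = hcomb (1 / 3) (w ^+ (2 * j) / 3) (w ^+ j / 3) 0.
Proof.
apply/matrixP => i k; rewrite !mxE rmorph_nat eqmod3_indicator.
(* [field] would try to evaluate the Hamming distance, so abstract it first. *)
by move: (hamming _ _) => h; rewrite expr1n mul0r addr0 -exprM !exprD; field.
Qed.

Lemma map_Jmx : toF (Jmx n) = hcomb 1 0 0 0.
Proof. by apply/matrixP => i k; rewrite !mxE rmorph1 expr1n !mul0r !addr0 mulr1. Qed.

Lemma hcombD u0 u1 u2 u3 v0 v1 v2 v3 :
  hcomb u0 u1 u2 u3 + hcomb v0 v1 v2 v3 = hcomb (u0 + v0) (u1 + v1) (u2 + v2) (u3 + v3).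
Proof.
rewrite /hcomb !scalerDl.
by rewrite addrACA [X in X + _]addrACA [X in X + _ + _]addrACA.
Qed.

Lemma hcombN u0 u1 u2 u3 : - hcomb u0 u1 u2 u3 = hcomb (- u0) (- u1) (- u2) (- u3).
Proof. by rewrite /hcomb !opprD -!scaleNr. Qed.

Lemma hcombZ c u0 u1 u2 u3 : c *: hcomb u0 u1 u2 u3 = hcomb (c * u0) (c * u1) (c * u2) (c * u3).
Proof. by rewrite /hcomb !scalerDr !scalerA. Qed.

Local Notation J := (hammx l 1).
Local Notation P := (hammx l w).
Local Notation Q := (hammx l (w ^+ 2)).
Local Notation T := ((3 : F) ^+ d).
Local Notation G := ((1 + 2 * w) ^+ d).
Local Notation H := ((1 + 2 * w ^+ 2) ^+ d).

Lemma hcomb_mul u0 u1 u2 u3 v0 v1 v2 v3 :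
  hcomb u0 u1 u2 u3 *m hcomb v0 v1 v2 v3 =
  hcomb (u0 * v0 * T + (u0 * v1 + u1 * v0) * G + (u0 * v2 + u2 * v0) * H
           + u0 * v3 + u3 * v0)
        (u1 * v3 + u2 * v2 * G + u3 * v1)
        (u1 * v1 * H + u2 * v3 + u3 * v2)
        ((u1 * v2 + u2 * v1) * T + u3 * v3).
Proof.
have JJ : J *m J = T *: J by apply: hammx_mul; ring.
have JP : J *m P = G *: J by apply: hammx_mul; ring.
have PJ : P *m J = G *: J by apply: hammx_mul; ring.
have JQ : J *m Q = H *: J by apply: hammx_mul; ring.
have QJ : Q *m J = H *: J by apply: hammx_mul; ring.
have PP : P *m P = H *: Q by apply: hammx_mul; ring: w2.
have QQ : Q *m Q = G *: P by apply: hammx_mul; ring: w2.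
have PQ : P *m Q = T *: 1%:M by rewrite -(hammx0 F); apply: hammx_mul; ring: w2.
have QP : Q *m P = T *: 1%:M by rewrite -(hammx0 F); apply: hammx_mul; ring: w2.
rewrite /hcomb !mulmxDl !mulmxDr -!scalemxAl -!scalemxAr.
rewrite JJ JP PJ JQ QJ PP QQ PQ QP !mulmx1 !mul1mx.
move: J P Q (1%:M : 'M[F]_n) => A B C D.
by apply/matrixP => i k; rewrite !mxE; ring.
Qed.

Lemma expr_1_2w : G = (1 + 2 * w) * ((-1) ^+ l * 3 ^+ l).
Proof.
rewrite addn1 exprS exprM (_ : (1 + 2 * w) ^+ 2 = -1 * 3); last by ring: w2.
by rewrite exprMn.
Qed.

Lemma expr_1_2w2 : H = - ((1 + 2 * w) * ((-1) ^+ l * 3 ^+ l)).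
Proof.
rewrite (_ : 1 + 2 * w ^+ 2 = - (1 + 2 * w)); last by ring: w2.
by rewrite (exprNn (1 + 2 * w)) expr_1_2w exprD exprM sqrrN !expr1n expr1 mul1r mulN1r.
Qed.

Lemma expr3_mul m k : (3 : F) ^+ (m * k) = (3 ^+ k) ^+ m.
Proof. by rewrite mulnC exprM. Qed.

Lemma expr3_mul_pred m k : (0 < m * k)%N -> (3 : F) ^+ (m * k - 1) = (3 ^+ k) ^+ m / 3.
Proof. by move=> mk_gt0; rewrite exprB ?unitfE ?pnatr_eq0 // expr3_mul expr1. Qed.

Ltac hcomb_eval :=
  rewrite ?map_mod3mx ?map_Jmx !hcomb_mul ?hcombN ?hcombD !hcombZ ?hcombD;
  rewrite expr_1_2w expr_1_2w2 exprD !expr3_mul ?expr3_mul_pred ?muln_gt0 //;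
  congr hcomb; field: w2 (sqrr_sign F l).

Lemma map_mod3mx1_cube : (0 < l)%N ->
  let N := toF (mod3mx l 1) in
  N *m N *m N =
    (3 ^+ (4 * l - 1) + (-1) ^+ l * 3 ^+ (3 * l) + 5 * 3 ^+ (2 * l - 1)) *: N
  + (3 ^+ (4 * l - 1) + (-1) ^+ l * 3 ^+ (3 * l) + 2 * 3 ^+ (2 * l - 1)) *:
      (toF (Jmx n) - N).
Proof. by move=> l_gt0 N; rewrite /N; hcomb_eval. Qed.

Lemma map_mod3mx2_cube : (0 < l)%N ->
  let N := toF (mod3mx l 2) in
  N *m N *m N =
    (3 ^+ (4 * l - 1) - (-1) ^+ l * 3 ^+ (3 * l) + 5 * 3 ^+ (2 * l - 1)) *: N
  + (3 ^+ (4 * l - 1) - (-1) ^+ l * 3 ^+ (3 * l) + 2 * 3 ^+ (2 * l - 1)) *: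
      (toF (Jmx n) - N).
Proof. by move=> l_gt0 N; rewrite /N; hcomb_eval. Qed.

Lemma map_mod3mx0_cube : (0 < l)%N ->
  let N := toF (mod3mx l 0) in
  N *m N *m N =
    (3 ^+ (4 * l - 1) + 2 * 3 ^+ (2 * l - 1)) *: N
  + (3 ^+ (4 * l - 1) - 3 ^+ (2 * l - 1)) *: (toF (Jmx n) - N).
Proof. by move=> l_gt0 N; rewrite /N; hcomb_eval. Qed.

Lemma map_mod3mx1_mulJ :
  toF (mod3mx l 1) *m toF (Jmx n) =
  (3 ^+ (2 * l) + (-1) ^+ l * 3 ^+ l) *: toF (Jmx n).
Proof. by hcomb_eval. Qed.

Lemma map_mod3mx2_mulJ :
  toF (mod3mx l 2) *m toF (Jmx n) =
  (3 ^+ (2 * l) - (-1) ^+ l * 3 ^+ l) *: toF (Jmx n).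
Proof. by hcomb_eval. Qed.

Lemma map_mod3mx0_mulJ :
  toF (mod3mx l 0) *m toF (Jmx n) = 3 ^+ (2 * l) *: toF (Jmx n).
Proof. by hcomb_eval. Qed.

End CubeRootOfUnity.

Lemma algC_cube_root_of_unity : exists w : algC, w ^+ 2 = - w - 1.
Proof.
have [w w_prim] := C_prim_root_exists (isT : (0 < 3)%N).
have w_neq1 : w - 1 != 0 by rewrite subr_eq0 -[w]expr1 -(prim_order_dvd w_prim).
have : (w - 1) * (w ^+ 2 + w + 1) = w ^+ 3 - 1 by ring.
rewrite (prim_expr_order w_prim) subrr => /eqP.
rewrite mulf_eq0 (negbTE w_neq1) /= => /eqP w_root.
by exists w; apply/eqP; rewrite -subr_eq0 -w_root; apply/eqP; ring.
Qed.

Lemma map_intmx_inj (F : numDomainType) m k :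
  injective (map_mx (intr : int -> F) : 'M_(m, k) -> 'M_(m, k)).
Proof.
move=> A B eqAB; apply/matrixP => i j; apply: (@intr_inj F).
by have := congr1 (fun M : 'M[F]_(m, k) => M i j) eqAB; rewrite !mxE.
Qed.

Section BlockSizes.
Variable l : nat.
Let pow3_le : (3 ^ l <= 3 ^ (2 * l))%N.
Proof. by rewrite leq_exp2l // leq_pmull. Qed.

Lemma Posz_expn3 m : ((3 ^ m)%N : int) = 3%:Z ^+ m.
Proof. by rewrite -natz natrX. Qed.

Lemma block_size1E :
  ((if odd l then 3 ^ (2 * l) - 3 ^ l else 3 ^ (2 * l) + 3 ^ l)%N : int)
  = 3%:Z ^+ (2 * l) + (-1) ^+ l * 3%:Z ^+ l.
Proof.
rewrite -signr_odd; case: (odd l) => /=; rewrite -!Posz_expn3 ?mul1r ?mulN1r //.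
by rewrite -subzn ?pow3_le.
Qed.

Lemma block_size2E :
  ((if odd l then 3 ^ (2 * l) + 3 ^ l else 3 ^ (2 * l) - 3 ^ l)%N : int)
  = 3%:Z ^+ (2 * l) - (-1) ^+ l * 3%:Z ^+ l.
Proof.
rewrite -signr_odd; case: (odd l) => /=; rewrite -!Posz_expn3 ?mul1r ?mulN1r ?opprK //.
by rewrite -subzn ?pow3_le.
Qed.

Lemma block_sizes_neq :
  let k1 := (if odd l then 3 ^ (2 * l) - 3 ^ l else 3 ^ (2 * l) + 3 ^ l)%N in
  let k2 := (if odd l then 3 ^ (2 * l) + 3 ^ l else 3 ^ (2 * l) - 3 ^ l)%N in
  [/\ k1 <> k2, k1 <> 3 ^ (2 * l) & k2 <> 3 ^ (2 * l)]%N.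
Proof.
have pow3_gt0 : (0 < 3 ^ l)%N by rewrite expn_gt0.
by move=> k1 k2; rewrite /k1 /k2; case: (odd l); split; lia.
Qed.

End BlockSizes.

Section KSDintegral.
Variable l : nat.
Local Notation n := #|KSDpt l|.
Local Notation J := (Jmx n).

Lemma mod3mx1_cube : (0 < l)%N ->
  let N := mod3mx l 1 in
  N *m N *m N =
    (3%:Z ^+ (4 * l - 1) + (-1) ^+ l * 3%:Z ^+ (3 * l) + 5 * 3%:Z ^+ (2 * l - 1)) *: N
  + (3%:Z ^+ (4 * l - 1) + (-1) ^+ l * 3%:Z ^+ (3 * l) + 2 * 3%:Z ^+ (2 * l - 1)) *: (J - N).
Proof.
move=> l_gt0 N; have [w w2] := algC_cube_root_of_unity.
apply: (@map_intmx_inj algC); rewrite !map_mxM map_mxD !map_mxZ map_mxB.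
rewrite !rmorphD !rmorphM !rmorphXn rmorphN1.
exact: (map_mod3mx1_cube w2 l_gt0).
Qed.

Lemma mod3mx2_cube : (0 < l)%N ->
  let N := mod3mx l 2 in
  N *m N *m N =
    (3%:Z ^+ (4 * l - 1) - (-1) ^+ l * 3%:Z ^+ (3 * l) + 5 * 3%:Z ^+ (2 * l - 1)) *: N
  + (3%:Z ^+ (4 * l - 1) - (-1) ^+ l * 3%:Z ^+ (3 * l) + 2 * 3%:Z ^+ (2 * l - 1)) *: (J - N).
Proof.
move=> l_gt0 N; have [w w2] := algC_cube_root_of_unity.
apply: (@map_intmx_inj algC); rewrite !map_mxM map_mxD !map_mxZ map_mxB.
rewrite !rmorphD !rmorphN !rmorphM !rmorphXn rmorphN1.
exact: (map_mod3mx2_cube w2 l_gt0).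
Qed.

Lemma mod3mx0_cube : (0 < l)%N ->
  let N := mod3mx l 0 in
  N *m N *m N =
    (3%:Z ^+ (4 * l - 1) + 2 * 3%:Z ^+ (2 * l - 1)) *: N
  + (3%:Z ^+ (4 * l - 1) - 3%:Z ^+ (2 * l - 1)) *: (J - N).
Proof.
move=> l_gt0 N; have [w w2] := algC_cube_root_of_unity.
apply: (@map_intmx_inj algC); rewrite !map_mxM map_mxD !map_mxZ map_mxB.
rewrite !rmorphD !rmorphN !rmorphM !rmorphXn.
exact: (map_mod3mx0_cube w2 l_gt0).
Qed.

Lemma mod3mx1_mulJ :
  mod3mx l 1 *m J = ((if odd l then 3 ^ (2 * l) - 3 ^ l else 3 ^ (2 * l) + 3 ^ l)%N : int) *: J.
Proof.
rewrite block_size1E.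
have [w w2] := algC_cube_root_of_unity.
apply: (@map_intmx_inj algC); rewrite map_mxM map_mxZ.
rewrite !rmorphD !rmorphM !rmorphXn rmorphN1.
exact: (map_mod3mx1_mulJ w2 l).
Qed.

Lemma mod3mx2_mulJ :
  mod3mx l 2 *m J = ((if odd l then 3 ^ (2 * l) + 3 ^ l else 3 ^ (2 * l) - 3 ^ l)%N : int) *: J.
Proof.
rewrite block_size2E.
have [w w2] := algC_cube_root_of_unity.
apply: (@map_intmx_inj algC); rewrite map_mxM map_mxZ.
rewrite !rmorphD !rmorphN !rmorphM !rmorphXn rmorphN1.
exact: (map_mod3mx2_mulJ w2 l).
Qed.

Lemma mod3mx0_mulJ : mod3mx l 0 *m J = ((3 ^ (2 * l))%N : int) *: J.
Proof.
rewrite Posz_expn3.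
have [w w2] := algC_cube_root_of_unity.
apply: (@map_intmx_inj algC); rewrite map_mxM map_mxZ.
rewrite rmorphXn.
exact: (map_mod3mx0_mulJ w2 l).
Qed.

End KSDintegral.

Section KSDscheme.
Variable l : nat.

Lemma KSDadj_mod3mx j : (0 < j < 3)%N -> KSDadj l j = mod3mx l j.
Proof.
case/andP => j_gt0 j_lt3; have j_neq0 := lt0n_neq0 j_gt0.
apply/matrixP => i k; rewrite !mxE /KSDrel (negbTE j_neq0).
case: (posnP (hamming _ _)) => [->|//].
by rewrite mod0n modn_small // eq_sym (negbTE j_neq0).
Qed.

Lemma KSDadj3_addI : KSDadj l 3 + 1%:M = mod3mx l 0.
Proof.
apply/matrixP => i k; rewrite !mxE /KSDrel /= -(inj_eq enum_val_inj) -hamming_eq0.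
by case: (hamming _ _) => [|h] //=; rewrite addr0.
Qed.

Lemma mod3mx_tr j : (mod3mx l j)^T = mod3mx l j.
Proof. by apply/matrixP => i k; rewrite !mxE hammingC. Qed.

Lemma mod3mx_01 j i k : mod3mx l j i k = 0 \/ mod3mx l j i k = 1.
Proof. by rewrite mxE; case: (_ == _); [right | left]. Qed.

Lemma card_KSDpt : #|KSDpt l| = (3 ^ (2 * l + 1))%N.
Proof. by rewrite card_ffun !card_ord. Qed.

End KSDscheme.

Lemma sym_partial_geometric_of_tr n v k (alpha beta : int) (N : 'M[int]_n) :
  n = v -> N^T = N -> (forall i j, N i j = 0 \/ N i j = 1) ->
  N *m Jmx n = k%:Z *: Jmx n ->
  N *m N *m N = beta *: N + alpha *: (Jmx n - N) ->
  sym_partial_geometric v k alpha beta N.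
Proof.
move=> nv trN N01 NJ N3; have rowN i : \sum_j N i j = k.
  have := congr1 (fun M : 'M_n => M i i) NJ; rewrite !mxE mulr1 => <-.
  by apply: eq_bigr => j _; rewrite mxE mulr1.
split=> // [j|]; last by rewrite trN.
by rewrite -(rowN j); apply: eq_bigr => i _; rewrite -{1}trN mxE.
Qed.

Lemma sym_partial_geometric_iso n v v' k k' a a' b b' (N N' : 'M[int]_n) :
  (0 < n)%N -> sym_partial_geometric v k a b N -> sym_partial_geometric v' k' a' b' N' ->
  design_iso N N' -> k = k'.
Proof.
case: n N N' => // n N N' _ [_ _ rowN _ _] [_ _ rowN' _ _] [s [t NN']].
apply/eqP; rewrite -eqz_nat -(rowN (s ord0)) -(rowN' ord0).
by rewrite (reindex_inj (@perm_inj _ t)); apply/eqP/eq_bigr => j _; rewrite NN'.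
Qed.

Theorem corollary6p3 (l : nat) (hl : (1 <= l)%N) :
  let A1 := KSDadj l 1 in
  let A2 := KSDadj l 2 in
  let A3I := KSDadj l 3 + 1%:M in
  let J := Jmx #|KSDpt l| in
  let t (n : nat) : int := (3%:Z) ^+ n in
  let s : int := (-1) ^+ l in
  [/\ A1 *m A1 *m A1 =
        (t (4 * l - 1)%N + s * t (3 * l)%N + 5 * t (2 * l - 1)%N) *: A1
      + (t (4 * l - 1)%N + s * t (3 * l)%N + 2 * t (2 * l - 1)%N) *: (J - A1),
      A2 *m A2 *m A2 =
        (t (4 * l - 1)%N - s * t (3 * l)%N + 5 * t (2 * l - 1)%N) *: A2
      + (t (4 * l - 1)%N - s * t (3 * l)%N + 2 * t (2 * l - 1)%N) *: (J - A2),
      A3I *m A3I *m A3I =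
        (t (4 * l - 1)%N + 2 * t (2 * l - 1)%N) *: A3I
      + (t (4 * l - 1)%N - t (2 * l - 1)%N) *: (J - A3I),
      [/\ sym_partial_geometric (3 ^ (2 * l + 1))
            (if odd l then 3 ^ (2 * l) - 3 ^ l else 3 ^ (2 * l) + 3 ^ l)%N
            (t (4 * l - 1)%N + s * t (3 * l)%N + 2 * t (2 * l - 1)%N)
            (t (4 * l - 1)%N + s * t (3 * l)%N + 5 * t (2 * l - 1)%N) A1,
          sym_partial_geometric (3 ^ (2 * l + 1))
            (if odd l then 3 ^ (2 * l) + 3 ^ l else 3 ^ (2 * l) - 3 ^ l)%N
            (t (4 * l - 1)%N - s * t (3 * l)%N + 2 * t (2 * l - 1)%N)
            (t (4 * l - 1)%N - s * t (3 * l)%N + 5 * t (2 * l - 1)%N) A2 &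
          sym_partial_geometric (3 ^ (2 * l + 1)) (3 ^ (2 * l))%N
            (t (4 * l - 1)%N - t (2 * l - 1)%N)
            (t (4 * l - 1)%N + 2 * t (2 * l - 1)%N) A3I] &
      [/\ ~ design_iso A1 A2, ~ design_iso A1 A3I & ~ design_iso A2 A3I]].
Proof.
move=> A1 A2 A3I J t s.
rewrite /A1 /A2 /A3I KSDadj3_addI !KSDadj_mod3mx //.
have D1 := sym_partial_geometric_of_tr (card_KSDpt l) (mod3mx_tr l 1) (@mod3mx_01 l 1)
  (mod3mx1_mulJ l) (mod3mx1_cube hl).
have D2 := sym_partial_geometric_of_tr (card_KSDpt l) (mod3mx_tr l 2) (@mod3mx_01 l 2)
  (mod3mx2_mulJ l) (mod3mx2_cube hl).
have D0 := sym_partial_geometric_of_tr (card_KSDpt l) (mod3mx_tr l 0) (@mod3mx_01 l 0)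
  (mod3mx0_mulJ l) (mod3mx0_cube hl).
have n_gt0 : (0 < #|KSDpt l|)%N by rewrite card_KSDpt expn_gt0.
have [k12 k10 k20] := block_sizes_neq l.
split; [exact: mod3mx1_cube | exact: mod3mx2_cube | exact: mod3mx0_cube | by [] |].
split=> iso; [apply: k12 | apply: k10 | apply: k20].
- exact: (sym_partial_geometric_iso n_gt0 D1 D2 iso).
- exact: (sym_partial_geometric_iso n_gt0 D1 D0 iso).
- exact: (sym_partial_geometric_iso n_gt0 D2 D0 iso).
Qed.
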